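(* Let $\mathcal{D}=(\Omega,\mathcal{B})$ be a supersimple $2$-$(n,4,\lambda)$ design. Fix $\infty\in\Omega$ and define $G:=\mathcal{L}_\infty(\mathcal{D})$. The following are equivalent: (i) $G$ is a group; (ii) $G=\mathcal{L}(\mathcal{D})=\langle[a,b]\mid a,b\in\Omega\rangle$; (iii) $\mathcal{L}(\mathcal{D})=\mathcal{L}_x(\mathcal{D})$ for all $x\in\Omega$. Furthermore, if one (and therefore all) of these conditions hold, then $G$ is transitive on $\Omega$ and $\operatorname{stab}_G(\infty)=\pi_\infty(\mathcal{D})$.
   Context: A $2$-$(n,4,\lambda)$ design $(\Omega,\mathcal{B})$: $n$ points, a multiset of $4$-subsets (lines), every $2$-subset in exactly $\lambda$ lines; supersimple: distinct lines meet in at most two points. For distinct $a,b$ with lines $\{a,b,a_i,b_i\}$ ($1\le i\le\lambda$) through them, $[a,b]:=(a,b)\prod_i(a_i,b_i)\in\operatorname{Sym}(\Omega)$; $[a,a]:=1$. Permutations act on the right, products composed left to right; move sequence $[a_0,\dots,a_k]:=[a_0,a_1][a_1,a_2]\cdots[a_{k-1},a_k]$. $\mathcal{L}(\mathcal{D})$ is the set of all move sequences; $\mathcal{L}_x(\mathcal{D})$ is the set of move sequences $[x,a_1,\dots,a_k]$ ($k\ge1$) starting at $x$; $\pi_\infty(\mathcal{D})$ is the set of move sequences starting and ending at $\infty$. *)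

From mathcomp Require Import all_boot all_fingroup.
Set Implicit Arguments. Unset Strict Implicit. Unset Printing Implicit Defensive.

(* Points: a finite type Omega.  Lines: a multiset of 4-subsets, given as a
   list (repetitions allowed) of sets. *)

Definition is_2design (Omega : finType) (n k lam : nat) (B : seq {set Omega}) : Prop :=
  [/\ #|Omega| = n,
      (forall L, L \in B -> #|L| = k) &
      (forall a b : Omega, a != b ->
         count (fun L : {set Omega} => (a \in L) && (b \in L)) B = lam)].

Definition supersimple (Omega : finType) (B : seq {set Omega}) : Prop :=
  forall i j, i < size B -> j < size B -> i != j ->
    #|nth set0 B i :&: nth set0 B j| <= 2.

Definition other1 (Omega : finType) (a b : Omega) (L : {set Omega}) : Omega :=
  nth a (enum (L :\: [set a; b])) 0.
Definition other2 (Omega : finType) (a b : Omega) (L : {set Omega}) : Omega :=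
  nth a (enum (L :\: [set a; b])) 1.

(* The move [a,b] = (a,b) prod_i (a_i,b_i);  [a,a] = 1.
   mathcomp permutations act on the right and products compose left to right,
   matching the paper's convention. *)
Definition move (Omega : finType) (B : seq {set Omega}) (a b : Omega) : {perm Omega} :=
  if a == b then 1%g
  else (tperm a b * \prod_(L <- B | (a \in L) && (b \in L))
                       tperm (other1 a b L) (other2 a b L))%g.

Fixpoint move_seq (Omega : finType) (B : seq {set Omega}) (a0 : Omega) (s : seq Omega)
  : {perm Omega} :=
  match s with
  | [::] => 1%g
  | a1 :: s' => (move B a0 a1 * move_seq B a1 s')%g
  end.

Definition inL (Omega : finType) (B : seq {set Omega}) (g : {perm Omega}) : Prop :=
  exists a0 s, g = move_seq B a0 s.

Definition inLx (Omega : finType) (B : seq {set Omega}) (x : Omega) (g : {perm Omega}) : Prop :=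
  exists s, size s >= 1 /\ g = move_seq B x s.

Definition inPi (Omega : finType) (B : seq {set Omega}) (x : Omega) (g : {perm Omega}) : Prop :=
  exists s, size s >= 1 /\ last x s = x /\ g = move_seq B x s.

Definition is_group (Omega : finType) (P : {perm Omega} -> Prop) : Prop :=
  [/\ P 1%g, (forall g h, P g -> P h -> P (g * h)%g) & (forall g, P g -> P g^-1%g)].

Definition moves (Omega : finType) (B : seq {set Omega}) : {set {perm Omega}} :=
  [set move B a b | a : Omega, b : Omega].

From mathcomp Require Import all_boot all_fingroup.

Set Implicit Arguments.
Unset Strict Implicit.
Unset Printing Implicit Defensive.

(** Everything rests on two facts about move sequences: [[a_0, ..., a_k]]
    maps [a_0] to [a_k], and concatenating sequences that match at the
    junction multiplies the permutations.  Hence [L_x] is closed under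
    products exactly when every move sequence can be restarted at any point,
    and in the finite group [Sym(Omega)] closure under products already gives
    a subgroup.  A group [L_oo] contains every [[a,b] = [oo,a]^-1 [oo,a,b]],
    so it is generated by the moves, and [[x,oo] L_oo] lies in [L_x]. *)

Section MoveSequences.

Variables (Omega : finType) (B : seq {set Omega}).

Lemma nth_enum_setD2_neq (a b : Omega) (L : {set Omega}) i :
  a != b -> nth a (enum (L :\: [set a; b])) i != b.
Proof.
move=> neq_ab; case: (ltnP i (size (enum (L :\: [set a; b])))) => [lt_i|le_i].
  have := mem_nth a lt_i; rewrite mem_enum in_setD in_set2.
  by case/andP => /norP [_ ->].
by rewrite nth_default.
Qed.

Lemma move_start (a b : Omega) : move B a b a = b.
Proof.
rewrite /move; case: eqP => [->|/eqP neq_ab]; first by rewrite perm1.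
rewrite permM tpermL.
apply: (big_ind (fun p : {perm Omega} => p b = b)) => [|p q pb qb|L _].
- by rewrite perm1.
- by rewrite permM pb qb.
- by rewrite tpermD // nth_enum_setD2_neq.
Qed.

Lemma move_seq_start (a0 : Omega) s : move_seq B a0 s a0 = last a0 s.
Proof.
elim: s a0 => [|a1 s IHs] a0 /=; first by rewrite perm1.
by rewrite permM move_start IHs.
Qed.

Lemma move_seq_cat (a0 : Omega) s t :
  move_seq B a0 (s ++ t) = (move_seq B a0 s * move_seq B (last a0 s) t)%g.
Proof.
elim: s a0 => [|a1 s IHs] a0 /=; first by rewrite mul1g.
by rewrite IHs mulgA.
Qed.

Lemma inL_gen_moves g : inL B g -> g \in <<moves B>>%g.
Proof.
case=> a0 [s ->]; elim: s a0 => [|a1 s IHs] a0 /=; first exact: group1.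
by rewrite groupM // mem_gen //; apply/imset2P; exists a0 a1.
Qed.

Lemma inLx_inL x g : inLx B x g -> inL B g.
Proof. by case=> s [_ ->]; exists x, s. Qed.

Lemma inLx1 x : inLx B x 1%g.
Proof. by exists [:: x]; rewrite /= /move eqxx mulg1. Qed.

Lemma inLx_move x y : inLx B x (move B x y).
Proof. by exists [:: y]; rewrite /= mulg1. Qed.

Lemma inLx_move_mul x y g : inLx B y g -> inLx B x (move B x y * g)%g.
Proof. by case=> s [_ ->]; exists (y :: s). Qed.

Lemma inLx_mul x g h : inLx B x g -> inLx B (g x) h -> inLx B x (g * h)%g.
Proof.
case=> s [s_gt0 ->]; rewrite move_seq_start => -[t [_ ->]].
by exists (s ++ t); rewrite move_seq_cat size_cat (leq_trans s_gt0) ?leq_addr.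
Qed.

Lemma inPiE x g : inPi B x g <-> inLx B x g /\ g x = x.
Proof.
split=> [[s [s_gt0 [last_s ->]]]|[[s [s_gt0 ->]]]].
  by split; [exists s | rewrite move_seq_start].
by rewrite move_seq_start => last_s; exists s.
Qed.

End MoveSequences.

Lemma is_group_mul_closed (T : finType) (P : {perm T} -> Prop) :
  P 1%g -> (forall g h, P g -> P h -> P (g * h)%g) -> is_group P.
Proof.
move=> P1 PM; split=> // g Pg; rewrite invg_expg.
by elim: (#[g]%g).-1 => [|k IHk]; rewrite ?expg0 // expgS; apply: PM.
Qed.

Section GroupOfMoves.

Variables (Omega : finType) (B : seq {set Omega}) (x : Omega).

Hypothesis Lx_group : is_group (inLx B x).

Lemma inLx_group_inL g : inLx B x g <-> inL B g.
Proof.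
split; first exact: inLx_inL.
case: Lx_group => _ Lx_mul Lx_inv [a0 [s ->]].
have Lx_xa0s : inLx B x (move_seq B x (a0 :: s)) by exists (a0 :: s).
by have := Lx_mul _ _ (Lx_inv _ (inLx_move B x a0)) Lx_xa0s; rewrite /= mulKg.
Qed.

Lemma inL_group_gen_moves g : inL B g <-> g \in <<moves B>>%g.
Proof.
split; first exact: inL_gen_moves.
case: Lx_group => Lx1 Lx_mul _ /gen_prodgP [k [c c_moves ->]].
apply/inLx_group_inL/(big_ind _ Lx1 Lx_mul) => i _.
have /imset2P [a b _ _ ->] := c_moves i.
by apply/inLx_group_inL; exists a, [:: b]; rewrite /= mulg1.
Qed.

End GroupOfMoves.

Theorem lemma2p6 (Omega : finType) (n lam : nat) (B : seq {set Omega})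
  (Hdes : is_2design n 4 lam B) (Hss : supersimple B) (inf : Omega) :
  let G := inLx B inf in
  ([/\ (is_group G -> (forall g, G g <-> inL B g) /\
                      (forall g, inL B g <-> g \in <<moves B>>%g)),
       ((forall g, G g <-> inL B g) /\ (forall g, inL B g <-> g \in <<moves B>>%g) ->
          (forall x g, inL B g <-> inLx B x g)) &
       ((forall x g, inL B g <-> inLx B x g) -> is_group G)])
  /\
  (is_group G ->
     (forall x y : Omega, exists2 g, G g & g x = y) /\
     (forall g, (G g /\ g inf = inf) <-> inPi B inf g)).
Proof.
move=> G; rewrite {}/G; split; first split.
- by move=> G_group; split=> g; [exact: inLx_group_inL G_group g | exact: inL_group_gen_moves G_group g].
- move=> [GE LE] x g; split; last exact: inLx_inL.
  move=> /LE Lg; rewrite -(mulKVg (move B x inf) g).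
  apply/inLx_move_mul/GE/LE; rewrite groupM ?groupV //.
  by rewrite mem_gen //; apply/imset2P; exists x inf.
- move=> LE; apply: is_group_mul_closed; first exact: inLx1.
  by move=> g h Gg /inLx_inL /LE Lh; apply: inLx_mul.
- move=> G_group; split=> [x y|g]; last by apply: iff_sym; apply: inPiE.
  exists (move B x y); last exact: move_start.
  by apply/(inLx_group_inL G_group); exists x, [:: y]; rewrite /= mulg1.
Qed.
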